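(* Let $n\ge2$, $\lambda_0\in\mathbb D\setminus\{0\}$, $y^0=(y_1^0,\dots,y_{n-1}^0,q^0)\in\widetilde{\mathbb G}_n$, and $j\in\{1,\dots,[n/2]\}$. Suppose $y^0_jy^0_{n-j}\ne\binom nj^2q^0$, $|y^0_{n-j}|\le|y^0_j|$ and $\|\Phi_j(\cdot,y^0)\|_{H^\infty}\le|\lambda_0|$. Let $w_j\in\mathbb C$ satisfy $w_j^2=\frac{y^0_jy^0_{n-j}-\binom nj^2q^0}{\binom nj^2\lambda_0}$ and let $Z_j=\begin{bmatrix}\frac{y^0_j}{\binom nj\lambda_0}&w_j\\ w_j&\frac{y^0_{n-j}}{\binom nj}\end{bmatrix}$. Then $\|Z_j\|\le1$, and $\|Z_j\|=1$ if and only if $\|\Phi_j(\cdot,y^0)\|_{H^\infty}=|\lambda_0|$.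
   Context: $\mathbb D$ open unit disc, $\|\cdot\|$ operator norm. $\widetilde{\mathbb G}_n=\{(y_1,\dots,y_{n-1},q)\in\mathbb C^n: q\in\mathbb D,\ y_j=\beta_j+\bar\beta_{n-j}q$ with $\beta_j\in\mathbb C$, $|\beta_j|+|\beta_{n-j}|<\binom nj$, $j=1,\dots,n-1\}$. For $y=(y_1,\dots,y_{n-1},q)$, $z\in\mathbb C$: $\Phi_j(z,y)=\frac{\binom nj qz-y_j}{y_{n-j}z-\binom nj}$ if $y_{n-j}z\ne\binom nj$ and $y_jy_{n-j}\ne\binom nj^2q$, and $\Phi_j(z,y)=y_j/\binom nj$ if $y_jy_{n-j}=\binom nj^2q$; $\|\Phi_j(\cdot,y)\|_{H^\infty}=\sup_{z\in\mathbb D}|\Phi_j(z,y)|$. *)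

From Stdlib Require Import Reals.
From Coquelicot Require Import Coquelicot.

Open Scope C_scope.

Definition binC (n j : nat) : C := RtoC (Binomial.C n j).

(* A point (y_1,...,y_{n-1},q) of C^n is represented by y : nat -> C
   (only the values y 1, ..., y (n-1) matter) and q : C. *)
Definition in_Gtilde (n : nat) (y : nat -> C) (q : C) : Prop :=
  Cmod q < 1 /\
  exists beta : nat -> C,
    forall j : nat, (1 <= j <= n - 1)%nat ->
      y j = beta j + Cconj (beta (n - j)%nat) * q /\
      (Cmod (beta j) + Cmod (beta (n - j)%nat) < Binomial.C n j)%R.

Definition Phi (n j : nat) (y : nat -> C) (q : C) (z : C) : C :=
  (if (Ceq_dec (y j * y (n - j)%nat) (binC n j * binC n j * q))
     then y j / binC n j
     else (binC n j * q * z - y j) / (y (n - j)%nat * z - binC n j)).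

(* ||Phi_j(.,y)||_{H^infty} = sup_{z in D} |Phi_j(z,y)| (over points where Phi_j is defined) *)
Definition Phi_Hinf (n j : nat) (y : nat -> C) (q : C) : Rbar :=
  Lub_Rbar (fun x : R => exists z : C,
    Cmod z < 1 /\
    (y j * y (n - j)%nat = binC n j * binC n j * q \/ y (n - j)%nat * z <> binC n j) /\
    x = Cmod (Phi n j y q z)).

Definition norm2 (v1 v2 : C) : R := sqrt (Cmod v1 ^ 2 + Cmod v2 ^ 2).

Definition opnorm2 (a b c d : C) : Rbar :=
  Lub_Rbar (fun x : R => exists v1 v2 : C,
    (norm2 v1 v2 <= 1)%R /\ x = norm2 (a * v1 + b * v2) (c * v1 + d * v2)).

(* Normalising by binom(n, j) and lambda0 gives
   |Phi_j(z, y0)| = |lambda0| |al - D z| / |1 - de z|, where al, de are the diagonal entries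
   of Z_j and D = det Z_j.  Since Z_j maps (1 - de z, z w_j) to (al - D z, w_j), a strict
   contraction bound for Z_j keeps this ratio strictly below 1.  Conversely, minimising
   |1 - de z|^2 - |al - D z|^2 >= 0 over each circle |z| = r gives a real quadratic
   inequality in r which forces the diagonal entries and the determinant of I - Z_j^* Z_j to
   be nonnegative, i.e. ||Z_j|| <= 1.  If det (I - Z_j^* Z_j) > 0, then both ||Z_j|| and the
   supremum are < 1.  If it vanishes, Z_j preserves the norm of some unit vector, and the
   radial defect factors as (1 - r) (1 - |al|^2 - (|de|^2 - |D|^2) r), which tends to 0 as
   r -> 1 while |1 - de z| stays away from 0, so the supremum is 1. *)

From Stdlib Require Import Reals Lra Lia Classical.
From Coquelicot Require Import Coquelicot.

Local Open Scope R_scope.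

(** * Real quadratic inequalities *)

Lemma quad_nonneg_at_1 (u v Y : R) :
  (forall r, 0 <= r < 1 -> 0 <= u + v * r ^ 2 - 2 * Y * r) -> 0 <= u + v - 2 * Y.
Proof.
  intros H. apply Rnot_lt_le. intros Hneg.
  set (m := - (u + v - 2 * Y)).
  set (K := Rabs Y + Rabs v + 1).
  assert (HK : 1 <= K) by (pose proof (Rabs_pos Y); pose proof (Rabs_pos v); unfold K; lra).
  set (t := Rmin (1 / 2) (m / (8 * K))).
  assert (Ht : 0 < t <= 1 / 2).
  { split; [apply Rmin_glb_lt; [lra | apply Rdiv_lt_0_compat; unfold m; lra] | apply Rmin_l]. }
  assert (HtK : t * K <= m / 8).
  { assert (Htm : t <= m / (8 * K)) by apply Rmin_r.
    apply Rmult_le_compat_r with (r := K) in Htm; [| lra].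
    replace (m / (8 * K) * K) with (m / 8) in Htm by (field; lra). exact Htm. }
  specialize (H (1 - t) ltac:(lra)).
  replace (u + v * (1 - t) ^ 2 - 2 * Y * (1 - t)) with (- m + t * (2 * Y - v * (2 - t)))
    in H by (unfold m; ring).
  assert (t * (2 * Y - v * (2 - t)) <= t * (4 * K)).
  { apply Rmult_le_compat_l; [lra|].
    pose proof (Rle_abs Y) as HY; pose proof (Rle_abs (- v)) as Hv; rewrite Rabs_Ropp in Hv.
    assert (0 <= (Rabs v + v) * (2 - t)) by (apply Rmult_le_pos; lra).
    pose proof (Rabs_pos Y); pose proof (Rabs_pos v).
    unfold K. nra. }
  unfold m in *. lra.
Qed.

Lemma mul2_le_quad_form (p s m x y : R) :
  0 <= p -> 0 <= s -> m ^ 2 <= p * s -> 0 <= x -> 0 <= y ->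
  2 * m * x * y <= p * x ^ 2 + s * y ^ 2.
Proof.
  intros Hp Hs Hm Hx Hy.
  assert (Hsq : (2 * m * x * y) ^ 2 <= (p * x ^ 2 + s * y ^ 2) ^ 2).
  { assert (0 <= (p * x ^ 2 - s * y ^ 2) ^ 2) by apply pow2_ge_0.
    assert (m ^ 2 * (x * y) ^ 2 <= p * s * (x * y) ^ 2)
      by (apply Rmult_le_compat_r; [apply pow2_ge_0 | exact Hm]).
    nra. }
  assert (0 <= p * x ^ 2 + s * y ^ 2) by nra.
  nra.
Qed.

Lemma radial_quad_bounds (a b e X Y : R) :
  0 <= b -> 0 <= X -> 0 <= Y -> b < 1 -> b <= a ->
  a * e - b <= Y -> Y ^ 2 = X ^ 2 + (1 - a ^ 2) * (b ^ 2 - e ^ 2) ->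
  (X = 0 -> e ^ 2 = a ^ 2 * b ^ 2) ->
  (forall r, 0 <= r <= 1 -> 0 <= 1 - a ^ 2 + (b ^ 2 - e ^ 2) * r ^ 2 - 2 * Y * r) ->
  2 * X <= 1 - a ^ 2 - b ^ 2 + e ^ 2 /\ e <= 1.
Proof.
  intros Hb HX HY Hb1 Hba HYlow HYsq HX0 Hquad.
  set (u := 1 - a ^ 2) in *. set (v := b ^ 2 - e ^ 2) in *.
  assert (Hu : 0 <= u) by (specialize (Hquad 0 ltac:(lra)); lra).
  assert (H1 : 2 * Y <= u + v) by (specialize (Hquad 1 ltac:(lra)); lra).
  split.
  - assert (Hvu : v <= u).
    { apply Rnot_lt_le. intros Huv.
      (* the vertex r = Y / v of the quadratic lies in [0, 1] and forces X = 0 *)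
      assert (Hv : 0 < v) by lra.
      assert (Hr : 0 <= Y / v <= 1).
      { split; [apply Rdiv_le_0_compat; lra |].
        apply Rmult_le_reg_r with v; [lra |]. field_simplify; lra. }
      specialize (Hquad _ Hr).
      replace (u + v * (Y / v) ^ 2 - 2 * Y * (Y / v)) with ((u * v - Y ^ 2) / v)
        in Hquad by (field; lra).
      assert (0 <= u * v - Y ^ 2).
      { apply Rmult_le_reg_r with (/ v); [apply Rinv_0_lt_compat; lra |]. lra. }
      assert (X = 0).
      { destruct (Req_dec X 0) as [| HXn]; [assumption |].
        pose proof (pow_nonzero X 2 HXn); pose proof (pow2_ge_0 X). lra. }
      assert (v <= u * b ^ 2) by (unfold u, v in *; rewrite HX0 by assumption; nra).
      assert (b ^ 2 <= 1) by nra.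
      assert (u * b ^ 2 <= u * 1) by (apply Rmult_le_compat_l; lra). lra. }
    assert (Hsq : (u - v) ^ 2 >= 4 * X ^ 2) by nra.
    unfold u, v in *. nra.
  - assert ((a + e) ^ 2 <= (1 + b) ^ 2) by (unfold u, v in *; nra).
    nra.
Qed.

Lemma lt_of_sq_gap (e b d x : R) :
  0 < e <= 1 / 2 -> 0 <= b < 1 -> 1 - b <= d -> 0 <= x ->
  d ^ 2 - x ^ 2 <= e * (1 - b) ^ 2 / 2 -> (1 - e) * d < x.
Proof.
  intros He Hb Hd Hx Hgap.
  assert ((1 - b) ^ 2 <= d ^ 2) by nra.
  assert ((1 - e) ^ 2 < 1 - e / 2) by nra.
  assert (0 < d ^ 2) by nra.
  assert (((1 - e) * d) ^ 2 < x ^ 2) by nra.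
  nra.
Qed.

(** * Suprema in Rbar *)

Lemma Lub_Rbar_le_ub (E : R -> Prop) (m : R) :
  (forall x, E x -> x <= m) -> Rbar_le (Lub_Rbar E) m.
Proof. intros H. apply (proj2 (Lub_Rbar_correct E)). intros x Ex. exact (H x Ex). Qed.

Lemma Lub_Rbar_ge_elem (E : R -> Prop) (x : R) : E x -> Rbar_le x (Lub_Rbar E).
Proof. apply (proj1 (Lub_Rbar_correct E)). Qed.

Lemma Lub_Rbar_eq_ub_iff (E : R -> Prop) (m : R) : (forall x, E x -> x <= m) ->
  Lub_Rbar E = m <-> forall eps, 0 < eps -> exists x, E x /\ m - eps < x.
Proof.
  intros Hub. split.
  - intros Hm eps Heps. apply NNPP. intros Hno.
    assert (Hle : Rbar_le (Lub_Rbar E) (m - eps)).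
    { apply Lub_Rbar_le_ub. intros x Ex. apply Rnot_lt_le. intros Hx. apply Hno. now exists x. }
    rewrite Hm in Hle. simpl in Hle. lra.
  - intros Happrox. apply Rbar_le_antisym; [now apply Lub_Rbar_le_ub |].
    destruct (Lub_Rbar_correct E) as [Hl _]. revert Hl. case (Lub_Rbar E).
    + intros l Hl. simpl. apply Rnot_lt_le. intros Hlm.
      destruct (Happrox (m - l) ltac:(lra)) as [x [Ex Hx]].
      specialize (Hl x Ex). simpl in Hl. lra.
    + intros _. exact I.
    + intros Hl. destruct (Happrox 1 Rlt_0_1) as [x [Ex _]]. exact (Hl x Ex).
Qed.

(** * The symmetric matrix Z = [[al, w], [w, de]] *)

(* Only for goals outside sections: section variables of type C cannot be destructed. *)
Ltac Cmod2_ring :=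
  rewrite ?Cmod2_alt;
  repeat match goal with x : C |- _ => destruct x end;
  unfold Re, Im, Cminus, Cplus, Copp, Cmult, Cconj, RtoC; simpl; ring.

Definition det2 (al de w : C) : C := (al * de - w * w)%C.

(* det (I - Z^* Z) *)
Definition defect_det (al de w : C) : R :=
  1 - Cmod al ^ 2 - Cmod de ^ 2 - 2 * Cmod w ^ 2 + Cmod (det2 al de w) ^ 2.

Lemma sym_mx_norm2_defect (al de w v1 v2 : C) :
  Cmod v1 ^ 2 + Cmod v2 ^ 2 - Cmod (al * v1 + w * v2) ^ 2 - Cmod (w * v1 + de * v2) ^ 2 =
  (1 - Cmod al ^ 2 - Cmod w ^ 2) * Cmod v1 ^ 2 + (1 - Cmod de ^ 2 - Cmod w ^ 2) * Cmod v2 ^ 2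
    - 2 * Re (Cconj v1 * (Cconj al * w + Cconj w * de) * v2).
Proof. Cmod2_ring. Qed.

Lemma sym_mx_defect_det (al de w : C) :
  (1 - Cmod al ^ 2 - Cmod w ^ 2) * (1 - Cmod de ^ 2 - Cmod w ^ 2)
    - Cmod (Cconj al * w + Cconj w * de) ^ 2 = defect_det al de w.
Proof. unfold defect_det, det2. Cmod2_ring. Qed.

Section SymmetricContraction.
Variables al de w : C.

(* I - Z^* Z = [[p, - rho], [- Cconj rho, s]] *)
Let p := 1 - Cmod al ^ 2 - Cmod w ^ 2.
Let s := 1 - Cmod de ^ 2 - Cmod w ^ 2.
Let rho := (Cconj al * w + Cconj w * de)%C.

Lemma contraction_bound (mu : R) :
  0 <= p - mu -> 0 <= s - mu -> Cmod rho ^ 2 <= (p - mu) * (s - mu) ->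
  forall v1 v2, Cmod (al * v1 + w * v2) ^ 2 + Cmod (w * v1 + de * v2) ^ 2
                <= (1 - mu) * (Cmod v1 ^ 2 + Cmod v2 ^ 2).
Proof.
  intros Hp Hs Hrho v1 v2.
  assert (HRe : Re (Cconj v1 * rho * v2) <= Cmod rho * Cmod v1 * Cmod v2).
  { pose proof (re_le_Cmod (Cconj v1 * rho * v2)) as H.
    rewrite !Cmod_mult, Cmod_conj in H.
    pose proof (Rle_abs (Re (Cconj v1 * rho * v2))). lra. }
  pose proof (mul2_le_quad_form (p - mu) (s - mu) (Cmod rho) (Cmod v1) (Cmod v2)
                Hp Hs Hrho (Cmod_ge_0 _) (Cmod_ge_0 _)).
  pose proof (sym_mx_norm2_defect al de w v1 v2) as Hid. fold p s rho in Hid.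
  nra.
Qed.

Lemma contraction_strict :
  0 <= p -> 0 <= s -> 0 < defect_det al de w ->
  exists mu, 0 < mu <= 1 /\
    forall v1 v2, Cmod (al * v1 + w * v2) ^ 2 + Cmod (w * v1 + de * v2) ^ 2
                  <= (1 - mu) * (Cmod v1 ^ 2 + Cmod v2 ^ 2).
Proof.
  intros Hp Hs Hdet. rewrite <- sym_mx_defect_det in Hdet. fold p s rho in Hdet.
  pose proof (pow2_ge_0 (Cmod rho)).
  assert (Hps : 0 < p + s) by nra.
  (* with mu = det / (p + s) one gets (p - mu) (s - mu) = |rho|^2 + mu^2 *)
  set (mu := (p * s - Cmod rho ^ 2) / (p + s)).
  assert (Hmu : mu * (p + s) = p * s - Cmod rho ^ 2) by (unfold mu; field; lra).
  assert (Hmu0 : 0 < mu) by (unfold mu; apply Rdiv_lt_0_compat; lra).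
  assert (Hmup : mu <= p) by nra.
  assert (Hmus : mu <= s) by nra.
  exists mu. split.
  - split; [exact Hmu0 |]. pose proof (pow2_ge_0 (Cmod al)); pose proof (pow2_ge_0 (Cmod w)).
    unfold p in Hmup. lra.
  - apply contraction_bound; nra.
Qed.

Lemma opnorm2_le_sqrt (k : R) : 0 <= k ->
  (forall v1 v2, Cmod (al * v1 + w * v2) ^ 2 + Cmod (w * v1 + de * v2) ^ 2
                 <= k * (Cmod v1 ^ 2 + Cmod v2 ^ 2)) ->
  Rbar_le (opnorm2 al w w de) (sqrt k).
Proof.
  intros Hk Hbound. apply Lub_Rbar_le_ub. intros x [v1 [v2 [Hv ->]]].
  unfold norm2 in *. apply sqrt_le_1_alt.
  assert (Cmod v1 ^ 2 + Cmod v2 ^ 2 <= 1).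
  { rewrite <- sqrt_1 in Hv. apply sqrt_le_0 in Hv; [lra | | lra].
    pose proof (pow2_ge_0 (Cmod v1)); pose proof (pow2_ge_0 (Cmod v2)). lra. }
  specialize (Hbound v1 v2). nra.
Qed.

Lemma opnorm2_ge_1 : 0 <= p -> defect_det al de w = 0 -> Rbar_le 1 (opnorm2 al w w de).
Proof.
  intros Hp Hdet. rewrite <- sym_mx_defect_det in Hdet. fold p s rho in Hdet.
  assert (Hunit : forall v1 v2, Cmod v1 ^ 2 + Cmod v2 ^ 2 = 1 ->
            p * Cmod v1 ^ 2 + s * Cmod v2 ^ 2 - 2 * Re (Cconj v1 * rho * v2) = 0 ->
            Rbar_le 1 (opnorm2 al w w de)).
  { intros v1 v2 Hv Hker. apply Lub_Rbar_ge_elem. exists v1, v2. unfold norm2.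
    pose proof (sym_mx_norm2_defect al de w v1 v2) as Hid. fold p s rho in Hid.
    rewrite Hv, sqrt_1. split; [lra |].
    replace (Cmod (al * v1 + w * v2) ^ 2 + Cmod (w * v1 + de * v2) ^ 2) with 1 by lra.
    now rewrite sqrt_1. }
  destruct (Req_dec p 0) as [Hp0 | Hpn].
  - (* then rho = 0, and Z does not shrink the first basis vector *)
    apply (Hunit 1%C 0%C); rewrite Cmod_1, Cmod_0; [ring |].
    rewrite Cmult_0_r. unfold Re; simpl. rewrite Hp0. ring.
  - (* the kernel of the defect matrix is spanned by (rho, p) *)
    assert (Hpos : 0 < Cmod rho ^ 2 + p ^ 2) by (pose proof (pow2_ge_0 (Cmod rho)); nra).
    set (k := / sqrt (Cmod rho ^ 2 + p ^ 2)).
    assert (Hk2 : k ^ 2 * (Cmod rho ^ 2 + p ^ 2) = 1)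
      by (unfold k; rewrite pow_inv, pow2_sqrt by lra; field; lra).
    assert (Hre : forall x : C, Re (Cconj (x * RtoC k) * x * RtoC (p * k)) = p * k ^ 2 * Cmod x ^ 2)
      by (intros [x1 x2]; rewrite Cmod2_alt; unfold Re, Im; simpl; ring).
    apply (Hunit (rho * RtoC k)%C (RtoC (p * k))).
    + rewrite Cmod_mult, !Cmod_R, Rpow_mult_distr, !pow2_abs, <- Hk2. ring.
    + rewrite Hre, Cmod_mult, !Cmod_R, Rpow_mult_distr, !pow2_abs.
      replace (p * (Cmod rho ^ 2 * k ^ 2) + s * (p * k) ^ 2 - 2 * (p * k ^ 2 * Cmod rho ^ 2))
        with (k ^ 2 * p * (p * s - Cmod rho ^ 2)) by ring.
      rewrite Hdet. ring.
Qed.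

Lemma lfrac_le_of_contraction (k : R) : 0 <= k <= 1 ->
  (forall v1 v2, Cmod (al * v1 + w * v2) ^ 2 + Cmod (w * v1 + de * v2) ^ 2
                 <= k * (Cmod v1 ^ 2 + Cmod v2 ^ 2)) ->
  forall z, Cmod z <= 1 -> Cmod (al - det2 al de w * z) ^ 2 <= k * Cmod (1 - de * z) ^ 2.
Proof.
  intros Hk Hbound z Hz.
  (* Z maps (1 - de z, z w) to (al - det Z * z, w) *)
  specialize (Hbound (1 - de * z)%C (z * w)%C).
  replace (al * (1 - de * z) + w * (z * w))%C with (al - det2 al de w * z)%C in Hbound
    by (unfold det2; ring).
  replace (w * (1 - de * z) + de * (z * w))%C with w in Hbound by ring.
  rewrite Cmod_mult in Hbound.
  assert (k * Cmod z ^ 2 <= 1) by (pose proof (Cmod_ge_0 z); nra).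
  pose proof (pow2_ge_0 (Cmod w)). nra.
Qed.
End SymmetricContraction.

(** * The linear fractional map z |-> (al - D z) / (1 - de z) *)

Lemma Cmod_lfrac_defect (al de D z : C) :
  Cmod (1 - de * z) ^ 2 - Cmod (al - D * z) ^ 2 =
  1 - Cmod al ^ 2 + (Cmod de ^ 2 - Cmod D ^ 2) * Cmod z ^ 2
    - 2 * Re ((de - Cconj al * D) * z).
Proof. Cmod2_ring. Qed.

Lemma exists_Cmod_Re_mul (K : C) (r : R) : 0 <= r ->
  exists z : C, Cmod z = r /\ Re (K * z) = Cmod K * r.
Proof.
  intros Hr. destruct (Ceq_dec K 0) as [-> | HK].
  - exists (RtoC r). rewrite Cmod_R, Rabs_pos_eq, Cmod_0 by lra.
    split; [reflexivity | unfold Re; simpl; ring].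
  - assert (HKm : 0 < Cmod K) by (apply Cmod_gt_0; exact HK).
    exists (RtoC (r / Cmod K) * Cconj K)%C. split.
    + rewrite Cmod_mult, Cmod_conj, Cmod_R, Rabs_pos_eq by (apply Rdiv_le_0_compat; lra).
      field; lra.
    + replace (K * (RtoC (r / Cmod K) * Cconj K))%C with (RtoC (r / Cmod K) * (K * Cconj K))%C
        by ring.
      rewrite <- Cmod2_conj. unfold Re; simpl. field; lra.
Qed.

Lemma exists_radial_lfrac_defect (al de D : C) (r : R) : 0 <= r ->
  exists z, Cmod z = r /\
    Cmod (1 - de * z) ^ 2 - Cmod (al - D * z) ^ 2 =
    1 - Cmod al ^ 2 + (Cmod de ^ 2 - Cmod D ^ 2) * r ^ 2 - 2 * Cmod (de - Cconj al * D) * r.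
Proof.
  intros Hr. destruct (exists_Cmod_Re_mul (de - Cconj al * D) r Hr) as [z [Hz HRe]].
  exists z. split; [exact Hz |]. rewrite Cmod_lfrac_defect, Hz, HRe. ring.
Qed.

Lemma Cmod_1_sub_mul_ge (a z : C) : 1 - Cmod a * Cmod z <= Cmod (1 - a * z).
Proof.
  pose proof (Cmod_triangle (1 - a * z) (a * z)) as Htri.
  replace (1 - a * z + a * z)%C with (RtoC 1) in Htri by ring.
  rewrite Cmod_1, Cmod_mult in Htri. lra.
Qed.

Lemma lfrac_radial_coeff_sq (al de w : C) :
  Cmod (de - Cconj al * det2 al de w) ^ 2 =
  (Cmod w ^ 2) ^ 2 + (1 - Cmod al ^ 2) * (Cmod de ^ 2 - Cmod (det2 al de w) ^ 2).
Proof. unfold det2. Cmod2_ring. Qed.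

(* [lfrac_le1 al de D]: the linear fractional map z |-> (al - D z) / (1 - de z) sends the
   unit disc into the closed unit disc; [lfrac_sup_eq1 al de D]: its supremum over the
   disc is 1.  Denominators are cleared. *)
Definition lfrac_le1 (al de D : C) : Prop :=
  forall z, Cmod z < 1 -> Cmod (al - D * z) <= Cmod (1 - de * z).

Definition lfrac_sup_eq1 (al de D : C) : Prop :=
  forall eps, 0 < eps ->
    exists z, Cmod z < 1 /\ (1 - eps) * Cmod (1 - de * z) < Cmod (al - D * z).

Section LfracContraction.
Variables al de w : C.
Let D := det2 al de w.
Let Y := Cmod (de - Cconj al * D).
Hypothesis Hle1 : lfrac_le1 al de D.
Hypothesis Hde : Cmod de < 1.

Lemma lfrac_radial_nonneg (r : R) : 0 <= r <= 1 ->
  0 <= 1 - Cmod al ^ 2 + (Cmod de ^ 2 - Cmod D ^ 2) * r ^ 2 - 2 * Y * r.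
Proof.
  assert (Hlt : forall r, 0 <= r < 1 ->
            0 <= 1 - Cmod al ^ 2 + (Cmod de ^ 2 - Cmod D ^ 2) * r ^ 2 - 2 * Y * r).
  { intros r' Hr. destruct (exists_radial_lfrac_defect al de D r' ltac:(lra)) as [z [Hz Hid]].
    fold Y in Hid. rewrite <- Hid.
    assert (Cmod (al - D * z) <= Cmod (1 - de * z)) by (apply Hle1; lra).
    pose proof (Cmod_ge_0 (al - D * z)). nra. }
  intros [Hr0 Hr1]. destruct (Rle_lt_or_eq_dec _ _ Hr1) as [Hr | ->]; [now apply Hlt |].
  pose proof (quad_nonneg_at_1 _ _ _ Hlt). rewrite pow1, !Rmult_1_r. lra.
Qed.

Lemma radial_defect_factor : defect_det al de w = 0 -> forall r, 0 <= r ->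
  exists z, Cmod z = r /\ Cmod (1 - de * z) ^ 2 - Cmod (al - D * z) ^ 2 =
    (1 - r) * ((1 - Cmod al ^ 2) - (Cmod de ^ 2 - Cmod D ^ 2) * r).
Proof.
  intros Hdet r Hr.
  set (u := 1 - Cmod al ^ 2). set (v := Cmod de ^ 2 - Cmod D ^ 2).
  assert (Hsum : u + v = 2 * Y).
  { pose proof (lfrac_radial_coeff_sq al de w) as HY. fold D Y u v in HY.
    unfold defect_det in Hdet. fold D in Hdet.
    pose proof (lfrac_radial_nonneg 1 ltac:(lra)) as H1. fold u v in H1.
    pose proof (Cmod_ge_0 (de - Cconj al * D)) as HY0. fold Y in HY0.
    assert (Huv : u - v = 2 * Cmod w ^ 2) by (unfold u, v; lra).
    assert ((u + v) ^ 2 = (2 * Y) ^ 2) by nra.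
    nra. }
  destruct (exists_radial_lfrac_defect al de D r Hr) as [z [Hz Hid]].
  exists z. split; [exact Hz |]. rewrite Hid. fold Y u v. rewrite <- Hsum. ring.
Qed.

Lemma lfrac_sup_eq1_of_defect_det_eq0 : defect_det al de w = 0 -> lfrac_sup_eq1 al de D.
Proof.
  intros Hdet eps Heps.
  set (b := Cmod de). set (u := 1 - Cmod al ^ 2). set (v := Cmod de ^ 2 - Cmod D ^ 2).
  set (e := Rmin eps (1 / 2)).
  assert (He : 0 < e <= 1 / 2)
    by (split; [apply Rmin_glb_lt; lra | apply Rmin_r]).
  assert (Hee : e <= eps) by apply Rmin_l.
  set (K := Rabs u + Rabs v + 1).
  assert (HK : 1 <= K) by (pose proof (Rabs_pos u); pose proof (Rabs_pos v); unfold K; lra).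
  assert (Hb : 0 <= b < 1) by (split; [apply Cmod_ge_0 | exact Hde]).
  set (t := e * (1 - b) ^ 2 / (2 * K)).
  assert (HtK : t * K = e * (1 - b) ^ 2 / 2) by (unfold t; field; lra).
  assert (Ht : 0 < t <= 1 / 4).
  { assert (0 < (1 - b) ^ 2) by (apply pow_lt; lra).
    assert ((1 - b) ^ 2 <= 1) by nra.
    split; [unfold t; apply Rdiv_lt_0_compat; [apply Rmult_lt_0_compat |]; lra |]. nra. }
  (* on the circle |z| = 1 - t the defect t (u - v (1 - t)) is at most t K, small
     compared with |1 - de z|^2 >= (1 - |de|)^2 *)
  destruct (radial_defect_factor Hdet (1 - t) ltac:(lra)) as [z [Hz Hfac]].
  fold u v in Hfac.
  exists z. split; [lra |].
  apply Rle_lt_trans with ((1 - e) * Cmod (1 - de * z));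
    [apply Rmult_le_compat_r; [apply Cmod_ge_0 | lra] |].
  apply (lt_of_sq_gap e b); [lra | lra | | apply Cmod_ge_0 |].
  - pose proof (Cmod_1_sub_mul_ge de z) as Hge. rewrite Hz in Hge. fold b in Hge. nra.
  - rewrite Hfac, <- HtK. replace (1 - (1 - t)) with t by ring.
    apply Rmult_le_compat_l; [lra |].
    pose proof (Rle_abs u); pose proof (Rle_abs (- v)) as Hv; rewrite Rabs_Ropp in Hv.
    assert (0 <= (Rabs v + v) * (1 - t)) by (apply Rmult_le_pos; lra).
    pose proof (Rabs_pos v). unfold K. nra.
Qed.

Hypothesis Hdeal : Cmod de <= Cmod al.

Lemma lfrac_le1_defect_nonneg :
  0 <= 1 - Cmod al ^ 2 - Cmod w ^ 2 /\ 0 <= 1 - Cmod de ^ 2 - Cmod w ^ 2 /\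
  0 <= defect_det al de w.
Proof.
  assert (HYlow : Cmod al * Cmod D - Cmod de <= Y).
  { pose proof (Cmod_triangle de (Cconj al * D - de)) as Htri.
    replace (de + (Cconj al * D - de))%C with (Cconj al * D)%C in Htri by ring.
    replace (Cconj al * D - de)%C with (- (de - Cconj al * D))%C in Htri by ring.
    rewrite Cmod_mult, Cmod_conj, Cmod_opp in Htri. fold Y in Htri. lra. }
  assert (HX0 : Cmod w ^ 2 = 0 -> Cmod D ^ 2 = Cmod al ^ 2 * Cmod de ^ 2).
  { intros Hw. assert (Hw0 : w = 0%C).
    { apply Cmod_eq_0. pose proof (Cmod_ge_0 w). nra. }
    unfold D, det2. rewrite Hw0. replace (al * de - 0 * 0)%C with (al * de)%C by ring.
    rewrite Cmod_mult. ring. }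
  pose proof (lfrac_radial_coeff_sq al de w) as HY. fold D Y in HY.
  destruct (radial_quad_bounds (Cmod al) (Cmod de) (Cmod D) (Cmod w ^ 2) Y
              (Cmod_ge_0 _) (pow2_ge_0 _) (Cmod_ge_0 _)
              Hde Hdeal HYlow HY HX0 lfrac_radial_nonneg) as [H2X HD1].
  assert (Hdet : 0 <= defect_det al de w) by (unfold defect_det; fold D; lra).
  (* p s = det + |rho|^2 >= 0 and p + s = det + 1 - |D|^2 >= 0 *)
  pose proof (sym_mx_defect_det al de w) as Hps.
  pose proof (pow2_ge_0 (Cmod (Cconj al * w + Cconj w * de))).
  assert (Cmod D ^ 2 <= 1) by (pose proof (Cmod_ge_0 D); nra).
  set (p := 1 - Cmod al ^ 2 - Cmod w ^ 2) in *. set (s := 1 - Cmod de ^ 2 - Cmod w ^ 2) in *.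
  assert (0 <= p * s) by lra.
  assert (0 <= p + s) by (unfold defect_det in Hdet; fold D in Hdet; unfold p, s; lra).
  split; [| split]; [nra | nra | exact Hdet].
Qed.

Theorem lfrac_le1_sym_contraction :
  Rbar_le (opnorm2 al w w de) 1 /\ (opnorm2 al w w de = 1 <-> lfrac_sup_eq1 al de D).
Proof.
  destruct lfrac_le1_defect_nonneg as [Hp [Hs Hdet]].
  assert (Hle : Rbar_le (opnorm2 al w w de) 1).
  { replace (Finite 1) with (Finite (sqrt (1 - 0))) by (now rewrite Rminus_0_r, sqrt_1).
    apply opnorm2_le_sqrt; [lra |]. apply contraction_bound; [lra | lra |].
    pose proof (sym_mx_defect_det al de w). nra. }
  split; [exact Hle |].
  destruct (Rle_lt_or_eq_dec _ _ Hdet) as [Hpos | Hzero].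
  - destruct (contraction_strict al de w Hp Hs Hpos) as [mu [Hmu Hbound]].
    split; intros Heq; exfalso.
    + assert (Hlt : Rbar_le (opnorm2 al w w de) (sqrt (1 - mu)))
        by (apply opnorm2_le_sqrt; [lra | exact Hbound]).
      assert (Hsqrt : sqrt (1 - mu) < sqrt 1) by (apply sqrt_lt_1_alt; lra).
      rewrite sqrt_1 in Hsqrt. rewrite Heq in Hlt. simpl in Hlt. lra.
    + (* a strict contraction bounds the map by sqrt (1 - mu) < 1 - mu / 2 *)
      destruct (Heq (mu / 2) ltac:(lra)) as [z [Hz Hgt]].
      pose proof (lfrac_le_of_contraction al de w (1 - mu) ltac:(lra) Hbound z ltac:(lra))
        as Hle_mu. fold D in Hle_mu.
      set (Dn := Cmod (1 - de * z)) in *. set (N := Cmod (al - D * z)) in *.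
      assert (0 <= (1 - mu / 2) * Dn) by (apply Rmult_le_pos; [lra | apply Cmod_ge_0]).
      assert (((1 - mu / 2) * Dn) ^ 2 < N ^ 2) by nra.
      nra.
  - split; intros _.
    + now apply lfrac_sup_eq1_of_defect_det_eq0.
    + apply Rbar_le_antisym; [exact Hle | now apply opnorm2_ge_1].
Qed.
End LfracContraction.

(** * Normal form of Phi_j *)

Lemma binomial_C_pos (n j : nat) : 0 < Binomial.C n j.
Proof.
  unfold Binomial.C.
  apply Rdiv_lt_0_compat; [| apply Rmult_lt_0_compat]; apply lt_0_INR, Factorial.lt_O_fact.
Qed.

Lemma binC_neq0 (n j : nat) : binC n j <> 0%C.
Proof. intros H. apply (f_equal fst) in H. simpl in H. pose proof (binomial_C_pos n j). lra. Qed.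

Lemma Cmod_binC (n j : nat) : Cmod (binC n j) = Binomial.C n j.
Proof. unfold binC. rewrite Cmod_R. apply Rabs_pos_eq, Rlt_le, binomial_C_pos. Qed.

Lemma in_Gtilde_coord_lt (n j : nat) (y : nat -> C) (q : C) :
  in_Gtilde n y q -> (1 <= j <= n - 1)%nat -> Cmod (y j) < Binomial.C n j.
Proof.
  intros [Hq [beta Hbeta]] Hj. destruct (Hbeta j Hj) as [-> Hsum].
  pose proof (Cmod_triangle (beta j) (Cconj (beta (n - j)%nat) * q)) as Htri.
  rewrite Cmod_mult, Cmod_conj in Htri.
  pose proof (Cmod_ge_0 (beta (n - j)%nat)); pose proof (Cmod_ge_0 q). nra.
Qed.

Section PhiNormalForm.
Variables (n j : nat) (y : nat -> C) (q lambda : C).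
Hypothesis Hlambda : lambda <> 0%C.
Let al := (y j / (binC n j * lambda))%C.
Let de := (y (n - j)%nat / binC n j)%C.
Let D := (q / lambda)%C.

Lemma normal_det2 (w : C) :
  (w * w = (y j * y (n - j)%nat - binC n j * binC n j * q) / (binC n j * binC n j * lambda))%C ->
  D = det2 al de w.
Proof.
  intros Hw. unfold D, al, de, det2. rewrite Hw. field.
  split; [exact Hlambda | apply binC_neq0].
Qed.

Lemma Cmod_de_le_al :
  Cmod (y (n - j)%nat) <= Cmod (y j) -> Cmod lambda < 1 -> Cmod de <= Cmod al.
Proof.
  intros Hba Hl. pose proof (binomial_C_pos n j). pose proof (Cmod_ge_0 (y j)).
  assert (0 < Cmod lambda) by (apply Cmod_gt_0; exact Hlambda).
  unfold al, de. rewrite !Cmod_div, Cmod_mult, Cmod_binC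
    by (try apply Cmult_neq_0; auto using binC_neq0).
  set (c := Binomial.C n j) in *. set (l := Cmod lambda) in *.
  replace (Cmod (y j) / (c * l)) with (Cmod (y j) / c / l) by (field; lra).
  assert (Cmod (y (n - j)%nat) / c <= Cmod (y j) / c)
    by (apply Rmult_le_compat_r; [apply Rlt_le, Rinv_0_lt_compat | ]; lra).
  assert (0 <= Cmod (y j) / c) by (apply Rdiv_le_0_compat; lra).
  assert (Cmod (y j) / c / l * l = Cmod (y j) / c) by (field; lra).
  nra.
Qed.

Hypothesis Hb : Cmod (y (n - j)%nat) < Binomial.C n j.

Lemma Cmod_de_lt_1 : Cmod de < 1.
Proof.
  unfold de. rewrite Cmod_div, Cmod_binC by apply binC_neq0.
  pose proof (binomial_C_pos n j). apply Rmult_lt_reg_r with (Binomial.C n j); [lra |].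
  field_simplify; lra.
Qed.

Lemma lfrac_denom_pos (z : C) : Cmod z < 1 -> 0 < Cmod (1 - de * z).
Proof.
  intros Hz. pose proof Cmod_de_lt_1. pose proof (Cmod_ge_0 de).
  pose proof (Cmod_1_sub_mul_ge de z). pose proof (Cmod_ge_0 z). nra.
Qed.

Lemma Phi_denom_neq (z : C) : Cmod z < 1 -> (y (n - j)%nat * z)%C <> binC n j.
Proof.
  intros Hz Heq. pose proof (lfrac_denom_pos z Hz) as Hpos.
  replace (de * z)%C with (y (n - j)%nat * z / binC n j)%C in Hpos
    by (unfold de; field; apply binC_neq0).
  rewrite Heq in Hpos.
  replace (1 - binC n j / binC n j)%C with (RtoC 0) in Hpos by (field; apply binC_neq0).
  rewrite Cmod_0 in Hpos. lra.
Qed.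

Hypothesis Hnondeg : (y j * y (n - j)%nat <> binC n j * binC n j * q)%C.

Lemma Cmod_Phi (z : C) : Cmod z < 1 ->
  Cmod (Phi n j y q z) = Cmod lambda * (Cmod (al - D * z) / Cmod (1 - de * z)).
Proof.
  intros Hz. pose proof (Phi_denom_neq z Hz) as Hden.
  assert (Hden' : (1 - de * z)%C <> 0%C)
    by (apply Cmod_gt_0, lfrac_denom_pos, Hz).
  assert (E : Phi n j y q z = (lambda * (al - D * z) / (1 - de * z))%C).
  { unfold Phi. destruct (Ceq_dec _ _) as [Heq | _]; [contradiction |].
    unfold al, de, D. field.
    repeat split; try apply Cminus_eq_contra; auto using binC_neq0. }
  rewrite E, Cmod_div, Cmod_mult by exact Hden'. field.
  apply Rgt_not_eq, lfrac_denom_pos, Hz.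
Qed.

Lemma Phi_Hinf_elem (z : C) : Cmod z < 1 ->
  Rbar_le (Cmod (Phi n j y q z)) (Phi_Hinf n j y q).
Proof.
  intros Hz. apply Lub_Rbar_ge_elem. exists z.
  split; [exact Hz | split; [right; now apply Phi_denom_neq | reflexivity]].
Qed.

Lemma lfrac_le1_of_Phi_Hinf :
  Rbar_le (Phi_Hinf n j y q) (Cmod lambda) -> lfrac_le1 al de D.
Proof.
  intros Hsup z Hz.
  pose proof (Rbar_le_trans _ _ _ (Phi_Hinf_elem z Hz) Hsup) as Hle. simpl in Hle.
  rewrite Cmod_Phi in Hle by exact Hz.
  pose proof (lfrac_denom_pos z Hz).
  assert (0 < Cmod lambda) by (apply Cmod_gt_0; exact Hlambda).
  set (Dn := Cmod (1 - de * z)) in *. set (N := Cmod (al - D * z)) in *.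
  assert (N = N / Dn * Dn) by (field; lra).
  nra.
Qed.

Lemma Phi_Hinf_eq_iff : lfrac_le1 al de D ->
  Phi_Hinf n j y q = Cmod lambda <-> lfrac_sup_eq1 al de D.
Proof.
  intros Hle1. assert (Hl : 0 < Cmod lambda) by (apply Cmod_gt_0; exact Hlambda).
  assert (Hratio : forall z, Cmod z < 1 ->
            let r := Cmod (al - D * z) / Cmod (1 - de * z) in
            Cmod (al - D * z) = r * Cmod (1 - de * z) /\ r <= 1).
  { intros z Hz r. pose proof (lfrac_denom_pos z Hz). pose proof (Hle1 z Hz).
    split; [unfold r; field; lra |].
    unfold r. apply Rmult_le_reg_r with (Cmod (1 - de * z)); [lra |].
    field_simplify; lra. }
  unfold Phi_Hinf. rewrite Lub_Rbar_eq_ub_iff.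
  - split.
    + intros Happrox eps Heps.
      destruct (Happrox (eps * Cmod lambda) ltac:(nra)) as [x [[z [Hz [_ ->]]] Hx]].
      exists z. split; [exact Hz |]. rewrite Cmod_Phi in Hx by exact Hz.
      destruct (Hratio z Hz) as [HN _]. rewrite HN.
      pose proof (lfrac_denom_pos z Hz). apply Rmult_lt_compat_r; [lra |]. nra.
    + intros Hsup1 eps Heps.
      destruct (Hsup1 (eps / Cmod lambda) ltac:(apply Rdiv_lt_0_compat; lra)) as [z [Hz Hgt]].
      exists (Cmod (Phi n j y q z)).
      split; [exists z; split; [exact Hz | split; [right; now apply Phi_denom_neq | reflexivity]] |].
      rewrite Cmod_Phi by exact Hz.
      destruct (Hratio z Hz) as [HN _]. rewrite HN in Hgt.
      pose proof (lfrac_denom_pos z Hz).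
      assert (1 - eps / Cmod lambda < Cmod (al - D * z) / Cmod (1 - de * z)) by nra.
      assert (Cmod lambda * (eps / Cmod lambda) = eps) by (field; lra).
      nra.
  - intros x [z [Hz [_ ->]]]. rewrite Cmod_Phi by exact Hz.
    destruct (Hratio z Hz) as [_ Hr]. pose proof (Rmult_le_compat_l _ _ _ (Rlt_le _ _ Hl) Hr).
    lra.
Qed.
End PhiNormalForm.

Theorem mainTheorem14 (n j : nat) (lambda0 : C) (y0 : nat -> C) (q0 : C) (wj : C) :
  (2 <= n)%nat ->
  Cmod lambda0 < 1 -> lambda0 <> RtoC 0 ->
  in_Gtilde n y0 q0 ->
  (1 <= j <= n / 2)%nat ->
  (y0 j * y0 (n - j)%nat <> binC n j * binC n j * q0)%C ->
  Cmod (y0 (n - j)%nat) <= Cmod (y0 j) ->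
  Rbar_le (Phi_Hinf n j y0 q0) (Finite (Cmod lambda0)) ->
  (wj * wj = (y0 j * y0 (n - j)%nat - binC n j * binC n j * q0)
              / (binC n j * binC n j * lambda0))%C ->
  let Zj11 := (y0 j / (binC n j * lambda0))%C in
  let Zj22 := (y0 (n - j)%nat / binC n j)%C in
  Rbar_le (opnorm2 Zj11 wj wj Zj22) (Finite 1) /\
  (opnorm2 Zj11 wj wj Zj22 = Finite 1 <-> Phi_Hinf n j y0 q0 = Finite (Cmod lambda0)).
Proof.
  intros Hn Hl Hl0 HG Hj Hnondeg Hba Hsup Hw Zj11 Zj22.
  assert (Hjn : (1 <= j <= n - 1)%nat) by (pose proof (Nat.div_lt n 2); lia).
  pose proof (in_Gtilde_coord_lt n j y0 q0 HG Hjn) as Ha.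
  assert (Hb : Cmod (y0 (n - j)%nat) < Binomial.C n j) by lra.
  pose proof (normal_det2 n j y0 q0 lambda0 Hl0 wj Hw) as HD.
  pose proof (lfrac_le1_of_Phi_Hinf n j y0 q0 lambda0 Hl0 Hb Hnondeg Hsup) as Hle1.
  rewrite (Phi_Hinf_eq_iff n j y0 q0 lambda0 Hl0 Hb Hnondeg Hle1).
  rewrite HD in Hle1 |- *.
  apply (lfrac_le1_sym_contraction Zj11 Zj22 wj Hle1).
  - exact (Cmod_de_lt_1 n j y0 Hb).
  - exact (Cmod_de_le_al n j y0 lambda0 Hl0 Hba Hl).
Qed.
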